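(* Let $A(t)$ be a holomorphic $2\times2$ matrix function on $|t|\le1$ with $A(0)=\operatorname{diag}(1,-1)$. Let $$\dot z=\frac{A(t,\varepsilon)}{(t-\alpha_0(\varepsilon))(t-\alpha_1(\varepsilon))}\,z$$ be a generic deformation of $\dot z=t^{-2}A(t)z$ with $\operatorname{Im}\alpha_0(\varepsilon)>0$. Set $t_0=-\frac12$ and let $M_0,M_1$ be the monodromy operators of the perturbed equation on $H_{t_0}$, with eigenvalues $\lambda_{i1},\lambda_{i2}$ of $M_i$ numbered as in the context. Then, as $\varepsilon\to0$, $$\lambda_{01},\lambda_{12}\to\infty,\qquad \lambda_{02},\lambda_{11}\to 0,$$ $$\ln\lambda_{01}=-(1+o(1))\ln\lambda_{02}=-(1+o(1))\ln\lambda_{11}=(1+o(1))\ln\lambda_{12}.$$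
   Context: Deformation: $A(t,\varepsilon)$ is holomorphic in $t$ on $|t|\le1$ and continuous in $\varepsilon\ge0$, $A(t,0)=A(t)$; $\alpha_0,\alpha_1$ are continuous, $\alpha_0+\alpha_1\equiv0$, $\alpha_i(0)=0$, $\alpha_0(\varepsilon)\ne\alpha_1(\varepsilon)$ for $\varepsilon>0$. Generic: the line through $\alpha_0(\varepsilon),\alpha_1(\varepsilon)$ intersects the real axis at an angle bounded away from $0$ uniformly in $\varepsilon>0$. Monodromy: $H_{t_0}$ is the space of local solutions at $t_0$. For $i=0,1$, let $l_i$ be a small counterclockwise circle around $\alpha_i(\varepsilon)$ whose closed disc does not contain $\alpha_{1-i}(\varepsilon)$, and let $a_i=[t_0,\alpha_i]\cap l_i$. $M_i$ is the monodromy of the perturbed equation along $[t_0,a_i]\circ l_i\circ[t_0,a_i]^{-1}$. Numbering: let $\kappa_{i1}(\varepsilon),\kappa_{i2}(\varepsilon)$ be the eigenvalues of $A(\alpha_i(\varepsilon),\varepsilon)$, numbered so that $\kappa_{i1}\to1$ and $\kappa_{i2}\to-1$. The characteristic numbers of the Fuchsian point $\alpha_i$ are $\rho_{ij}=\kappa_{ij}/(\alpha_i-\alpha_{1-i})$. The eigenvalue of $M_i$ corresponding to $\rho_{ij}$ is $\lambda_{ij}=\exp(2\pi i\rho_{ij})$, and $\ln\lambda_{ij}$ denotes the determination $2\pi i\rho_{ij}$. *)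

From HB Require Import structures.
From mathcomp Require Import all_boot all_order all_algebra.
From mathcomp Require Import all_classical all_reals all_analysis.
From mathcomp Require Import complex.
Import Order.TTheory GRing.Theory Num.Theory.
Import numFieldNormedType.Exports.
Local Open Scope ring_scope.
Local Open Scope complex_scope.

Set Implicit Arguments. Unset Strict Implicit. Unset Printing Implicit Defensive.

Definition cexp (R : realType) (z : R[i]) : R[i] :=
  (expR (complex.Re z))%:C * ((cos (complex.Im z))%:C + 'i * (sin (complex.Im z))%:C).

Definition char_rho (R : realType) (kappa ai aj : R[i]) : R[i] := kappa / (ai - aj).
Definition ln_lambda (R : realType) (kappa ai aj : R[i]) : R[i] :=
  2%:R * (pi : R)%:C * 'i * char_rho kappa ai aj.
Definition mon_eig (R : realType) (kappa ai aj : R[i]) : R[i] :=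
  cexp (ln_lambda kappa ai aj).

Definition holo_entries (R : realType) (F : R[i] -> 'M[R[i]]_2) : Prop :=
  forall (i j : 'I_2) (t : R[i]), Normc.normc t <= 1 ->
    derivable (fun s : (R[i])^o => (F s i j : (R[i])^o)) t 1.

Definition diag1m1 (R : realType) : 'M[R[i]]_2 :=
  \matrix_(i < 2, j < 2) (if i == j then (if i == 0 :> nat then 1 else -1) else 0).

(* The eigenvalues are explicit, ln λ_ij = 2πi κ_ij / (α_i - α_j), so only the
   colliding singular points and the limits κ_ij -> ±1 matter.  With d = α_0 - α_1 -> 0, genericity and Im α_0 > 0 give
   Im d >= c |d|, so for κ close to 1 we get Re (2πi κ / d) ≈ 2π Im d / |d|^2
   >= π c / |d| -> +oo, i.e. |λ| = exp (Re ln λ) -> +oo.  Negating κ or swapping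
   α_0 and α_1 negates ln λ, which handles the three other eigenvalues, and the
   ratios of the logarithms are ratios of the κ's, which tend to ±1. *)

From HB Require Import structures.
From mathcomp Require Import all_boot all_order all_algebra.
From mathcomp Require Import all_classical all_reals all_analysis.
From mathcomp Require Import complex.
From mathcomp Require Import ring lra.
Import Order.TTheory GRing.Theory Num.Theory.
Import numFieldNormedType.Exports.
Local Open Scope ring_scope.
Local Open Scope classical_set_scope.

Section ComplexPlane.
Local Open Scope complex_scope.
Context {R : realType}.
Implicit Types (k z a b : R[i]).

Lemma normc_ge0 z : 0 <= Normc.normc z.
Proof. by case: z => x y; exact: sqrtr_ge0. Qed.

Lemma normc_gt0 z : z != 0 -> 0 < Normc.normc z.
Proof.
move=> z0; rewrite lt_neqAle normc_ge0 andbT.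
by apply: contra z0 => /eqP/esym/Normc.eq0_normc ->.
Qed.

Lemma normc_Re_le z : `|complex.Re z| <= Normc.normc z.
Proof.
case: z => x y /=; rewrite -sqrtr_sqr ler_sqrt ?lerDl ?sqr_ge0 //.
by rewrite addr_ge0 ?sqr_ge0.
Qed.

Lemma normc_Im_le z : `|complex.Im z| <= Normc.normc z.
Proof.
case: z => x y /=; rewrite -sqrtr_sqr ler_sqrt ?lerDr ?sqr_ge0 //.
by rewrite addr_ge0 ?sqr_ge0.
Qed.

Lemma normc_sqr z : Normc.normc z ^+ 2 = complex.Re z ^+ 2 + complex.Im z ^+ 2.
Proof. by case: z => x y /=; rewrite sqr_sqrtr // addr_ge0 ?sqr_ge0. Qed.

Lemma normc_cexp z : Normc.normc (cexp z) = expR (complex.Re z).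
Proof.
rewrite /cexp Normc.normcM /= !mul0r !mul1r !subr0 !add0r !addr0 expr0n addr0.
by rewrite cos2Dsin2 sqrtr1 mulr1 sqrtr_sqr ger0_norm // ltW // expR_gt0.
Qed.

Lemma ln_lambdaN k a b : ln_lambda (- k) a b = - ln_lambda k a b.
Proof. by rewrite /ln_lambda /char_rho mulNr mulrN. Qed.

Lemma ln_lambda_swap k a b : ln_lambda k b a = - ln_lambda k a b.
Proof. by rewrite /ln_lambda /char_rho -opprB invrN !mulrN. Qed.

Lemma mon_eig_swap k a b : mon_eig k b a = mon_eig (- k) a b.
Proof. by rewrite /mon_eig ln_lambda_swap ln_lambdaN. Qed.

Lemma ln_lambda_ratio k k' a b :
  k' != 0 -> ln_lambda k a b = k / k' * ln_lambda k' a b.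
Proof.
move=> k'0; rewrite /ln_lambda /char_rho.
have [->|ab] := eqVneq a b; first by rewrite subrr invr0 !mulr0.
by field; rewrite subr_eq0 ab k'0.
Qed.

Lemma Re_ln_lambda k a b :
  complex.Re (ln_lambda k a b) =
  2 * pi * (complex.Re k * complex.Im (a - b) - complex.Im k * complex.Re (a - b))
    / Normc.normc (a - b) ^+ 2.
Proof.
rewrite normc_sqr /ln_lambda /char_rho.
by case: k => kr ki; case: (a - b) => dr di; rewrite /GRing.exp /=; ring.
Qed.

Lemma cross_lower_bound {c n kr ki dr di : R} :
  0 < n -> `|dr| <= n -> `|di| <= n -> c * n <= di ->
  `|kr - 1| <= c / 4 -> `|ki| <= c / 4 ->
  c * n / 2 <= kr * di - ki * dr.
Proof.
move=> n0; rewrite !ler_norml => /andP[? ?] /andP[? ?] cn /andP[? ?] /andP[? ?].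
have c_le1 : c <= 1 by nra.
nra.
Qed.

Lemma Re_ln_lambda_ge k a b (c : R) :
  a != b -> c * Normc.normc (a - b) <= complex.Im (a - b) ->
  Normc.normc (1 - k) <= c / 4 ->
  pi * c / Normc.normc (a - b) <= complex.Re (ln_lambda k a b).
Proof.
move=> ab cIm k1; rewrite Re_ln_lambda; set n := Normc.normc (a - b).
have n_gt0 : 0 < n by rewrite normc_gt0 // subr_eq0.
have kRe : `|complex.Re k - 1| <= c / 4.
  by rewrite distrC; apply: le_trans k1; have := normc_Re_le (1 - k); rewrite raddfB.
have kIm : `|complex.Im k| <= c / 4.
  by apply: le_trans k1; have := normc_Im_le (1 - k); rewrite raddfB /= sub0r normrN.
have cross := cross_lower_bound n_gt0 (normc_Re_le _) (normc_Im_le _) cIm kRe kIm.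
have -> : pi * c / n = 2 * pi * (c * n / 2) / n ^+ 2 by field; rewrite gt_eqF.
by rewrite ler_pM2r ?invr_gt0 ?exprn_gt0 // ler_pM2l ?mulr_gt0 ?pi_gt0.
Qed.

Section Limits.
Context {T : Type} {F : set_system T} {FF : Filter F}.

Lemma cvgC_normcP (f : T -> R[i]^o) (l : R[i]^o) :
  f x @[x --> F] --> l <-> Normc.normc (l - f x) @[x --> F] --> (0 : R).
Proof.
have normC z : `|z| = (Normc.normc z)%:C by case: z.
rewrite cvgrPdist_lt cvgr0Pnorm_lt; split => [fl r r0 | fl eps].
  have := fl r%:C; rewrite ltcR => /(_ r0); apply: filterS => x.
  by rewrite normC ltcR ger0_norm // normc_ge0.
rewrite ltcE /= => /andP[/eqP eps_real eps0]; have := fl _ eps0.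
apply: filterS => x; rewrite ger0_norm ?normc_ge0 //.
have -> : eps = (complex.Re eps)%:C by case: eps eps_real {eps0} => ? ? /= ->.
by rewrite normC ltcR.
Qed.

Lemma normc_sub_cvg0 {f g : T -> R[i]^o} {l : R[i]^o} :
  f x @[x --> F] --> l -> g x @[x --> F] --> l ->
  Normc.normc (f x - g x) @[x --> F] --> (0 : R).
Proof.
move=> fl gl; have : f x - g x @[x --> F] --> (l - l : R[i]^o) by exact: (cvgB fl gl).
by rewrite subrr => /cvgC_normcP; under eq_fun do rewrite sub0r normcN.
Qed.

Lemma cexp_normc_cvgy (f : T -> R[i]) :
  complex.Re (f x) @[x --> F] --> +oo ->
  Normc.normc (cexp (f x)) @[x --> F] --> +oo.
Proof.
apply: ger_cvgy; apply: nearW => x; rewrite normc_cexp.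
by have := expR_ge1Dx (complex.Re (f x)); lra.
Qed.

Lemma cexp_cvg0 (f : T -> R[i]) :
  complex.Re (f x) @[x --> F] --> -oo ->
  (cexp (f x) : R[i]^o) @[x --> F] --> (0 : R[i]^o).
Proof.
move=> /cvgNry Nfy; apply/cvgC_normcP.
under eq_fun do rewrite sub0r normcN normc_cexp -[complex.Re _]opprK.
exact: cvg_comp Nfy (@cvgr_expR R).
Qed.

Lemma ratio_sub1_cvg0 {k k' : T -> R[i]^o} {u : R[i]^o} :
  u != 0 -> k x @[x --> F] --> (1 : R[i]^o) -> k' x @[x --> F] --> u ->
  u * (k x / k' x) - 1 @[x --> F] --> (0 : R[i]^o).
Proof.
move=> u0 k1 k'u.
have -> : (0 : R[i]^o) = u * (1 / u) - 1 by rewrite mul1r mulfV // subrr.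
exact: (cvgB (cvgM (cvg_cst u) (cvgM k1 (cvgV u0 k'u))) (cvg_cst _)).
Qed.

End Limits.

Section TransversalCollision.
Context {T : Type} {F : set_system T} {FF : Filter F}.
Context {a b : T -> R[i]} {c : R}.
Hypothesis c_gt0 : 0 < c.
Hypothesis ab_cvg0 : Normc.normc (a x - b x) @[x --> F] --> 0.
Hypothesis ab_transversal : \forall x \near F,
  a x != b x /\ c * Normc.normc (a x - b x) <= complex.Im (a x - b x).

Lemma Re_ln_lambda_cvgy {k : T -> R[i]^o} :
  k x @[x --> F] --> (1 : R[i]^o) ->
  complex.Re (ln_lambda (k x) (a x) (b x)) @[x --> F] --> +oo.
Proof.
move=> /cvgC_normcP k1.
have pic_gt0 : 0 < pi * c by rewrite mulr_gt0 ?pi_gt0.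
pose r x := (pi * c)^-1 * Normc.normc (a x - b x).
have r_gt0 : \forall x \near F, 0 < r x.
  apply: filterS ab_transversal => x [ab _].
  by rewrite mulr_gt0 ?invr_gt0 ?normc_gt0 ?subr_eq0.
have r_cvg0 : r x @[x --> F] --> 0.
  by rewrite -(mulr0 (pi * c)^-1); exact: cvgM (cvg_cst _) ab_cvg0.
apply: (ger_cvgy _ ((cvgrVy r_gt0).2 r_cvg0)); near=> x.
have [ab cIm] : a x != b x /\ c * Normc.normc (a x - b x) <= complex.Im (a x - b x).
  by near: x.
rewrite /r /= invfM invrK; apply: Re_ln_lambda_ge ab cIm _.
by near: x; apply: cvgr_le k1 _ _; rewrite divr_gt0.
Unshelve. all: by end_near. Qed.

Lemma mon_eig_cvgy {k : T -> R[i]^o} :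
  k x @[x --> F] --> (1 : R[i]^o) ->
  Normc.normc (mon_eig (k x) (a x) (b x)) @[x --> F] --> +oo.
Proof. by move=> k1; apply: cexp_normc_cvgy; exact: Re_ln_lambda_cvgy. Qed.

Lemma mon_eig_cvg0 {k : T -> R[i]^o} :
  k x @[x --> F] --> (-1 : R[i]^o) ->
  (mon_eig (k x) (a x) (b x) : R[i]^o) @[x --> F] --> (0 : R[i]^o).
Proof.
move=> /cvgN; rewrite opprK => Nk1; apply: cexp_cvg0; apply/cvgNry.
suff -> : - (fun x => complex.Re (ln_lambda (k x) (a x) (b x))) =
          (fun x => complex.Re (ln_lambda (- k x) (a x) (b x))).
  exact: Re_ln_lambda_cvgy.
by apply/funext => x; rewrite ln_lambdaN raddfN.
Qed.

Lemma mon_eig_swap_cvgy {k : T -> R[i]^o} :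
  k x @[x --> F] --> (-1 : R[i]^o) ->
  Normc.normc (mon_eig (k x) (b x) (a x)) @[x --> F] --> +oo.
Proof.
move=> /cvgN; rewrite opprK => Nk1.
by under eq_fun do rewrite mon_eig_swap; exact: mon_eig_cvgy.
Qed.

Lemma mon_eig_swap_cvg0 {k : T -> R[i]^o} :
  k x @[x --> F] --> (1 : R[i]^o) ->
  (mon_eig (k x) (b x) (a x) : R[i]^o) @[x --> F] --> (0 : R[i]^o).
Proof.
move=> /cvgN Nk1.
by under eq_fun do rewrite mon_eig_swap; exact: mon_eig_cvg0.
Qed.

End TransversalCollision.
End ComplexPlane.

Theorem proposition3p3 (R : realType)
  (A0 : R[i] -> 'M[R[i]]_2) (A : R[i] -> R -> 'M[R[i]]_2)
  (alpha0 alpha1 : R -> R[i]^o)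
  (k01 k02 k11 k12 : R -> R[i]^o)
  (* A(t) holomorphic on |t| <= 1, A(0) = diag(1,-1) *)
  (hA0 : holo_entries A0)
  (hA00 : A0 0 = diag1m1 R)
  (* A(t,eps) holomorphic in t on |t| <= 1, continuous in eps >= 0, A(t,0) = A(t) *)
  (hAhol : forall e : R, 0 <= e -> holo_entries (fun t => A t e))
  (hAcont : forall i j : 'I_2,
     {within [set p : R[i]^o * R | Normc.normc (p.1 : R[i]) <= 1 /\ 0 <= p.2],
        continuous (fun p : R[i]^o * R => (A p.1 p.2 i j : R[i]^o))})
  (hAA0 : forall t : R[i], Normc.normc t <= 1 -> A t 0 = A0 t)
  (* the singular points alpha_0, alpha_1 *)
  (hal0c : {within `[0, +oo[, continuous alpha0})
  (hal1c : {within `[0, +oo[, continuous alpha1})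
  (halsum : forall e : R, 0 <= e -> alpha0 e + alpha1 e = 0)
  (hal00 : alpha0 0 = 0) (hal10 : alpha1 0 = 0)
  (halne : forall e : R, 0 < e -> alpha0 e != alpha1 e)
  (* genericity: the line through alpha_0, alpha_1 meets the real axis at an
     angle bounded away from 0, uniformly in eps > 0 *)
  (hgen : exists2 c : R, 0 < c & forall e : R, 0 < e ->
     c * Normc.normc (alpha0 e - alpha1 e) <= `|complex.Im (alpha0 e - alpha1 e)|)
  (* Im alpha_0(eps) > 0 *)
  (himal : forall e : R, 0 < e -> 0 < complex.Im (alpha0 e))
  (* kappa_{i1}, kappa_{i2} are the eigenvalues of A(alpha_i(eps), eps) *)
  (hk0 : forall e : R, 0 < e ->
     char_poly (A (alpha0 e) e) = ('X - (k01 e)%:P) * ('X - (k02 e)%:P))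
  (hk1 : forall e : R, 0 < e ->
     char_poly (A (alpha1 e) e) = ('X - (k11 e)%:P) * ('X - (k12 e)%:P))
  (* numbering: kappa_{i1} -> 1, kappa_{i2} -> -1 *)
  (hk01 : k01 e @[e --> 0^'+] --> (1 : R[i]^o))
  (hk02 : k02 e @[e --> 0^'+] --> (-1 : R[i]^o))
  (hk11 : k11 e @[e --> 0^'+] --> (1 : R[i]^o))
  (hk12 : k12 e @[e --> 0^'+] --> (-1 : R[i]^o)) :
  let lam01 e := mon_eig (k01 e) (alpha0 e) (alpha1 e) in
  let lam02 e := mon_eig (k02 e) (alpha0 e) (alpha1 e) in
  let lam11 e := mon_eig (k11 e) (alpha1 e) (alpha0 e) in
  let lam12 e := mon_eig (k12 e) (alpha1 e) (alpha0 e) in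
  let L01 e := ln_lambda (k01 e) (alpha0 e) (alpha1 e) in
  let L02 e := ln_lambda (k02 e) (alpha0 e) (alpha1 e) in
  let L11 e := ln_lambda (k11 e) (alpha1 e) (alpha0 e) in
  let L12 e := ln_lambda (k12 e) (alpha1 e) (alpha0 e) in
  [/\ Normc.normc (lam01 e) @[e --> 0^'+] --> +oo,
      Normc.normc (lam12 e) @[e --> 0^'+] --> +oo,
      (lam02 e : R[i]^o) @[e --> 0^'+] --> (0 : R[i]^o),
      (lam11 e : R[i]^o) @[e --> 0^'+] --> (0 : R[i]^o) &
      exists f1 f2 f3 : R -> R[i]^o,
        [/\ f1 e @[e --> 0^'+] --> (0 : R[i]^o),
            f2 e @[e --> 0^'+] --> (0 : R[i]^o),
            f3 e @[e --> 0^'+] --> (0 : R[i]^o) &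
            \forall e \near 0^'+,
              [/\ L01 e = - (1 + f1 e) * L02 e,
                  L01 e = - (1 + f2 e) * L11 e &
                  L01 e = (1 + f3 e) * L12 e]]].
Proof.
move=> lam01 lam02 lam11 lam12 L01 L02 L11 L12.
have [c c_gt0 hc] := hgen.
have [_ alpha0_cvg] := (continuous_within_itvcyP 0 alpha0).1 hal0c.
have [_ alpha1_cvg] := (continuous_within_itvcyP 0 alpha1).1 hal1c.
rewrite hal00 -hal10 in alpha0_cvg.
have D_cvg0 : Normc.normc (alpha0 e - alpha1 e) @[e --> 0^'+] --> 0.
  exact: (normc_sub_cvg0 alpha0_cvg alpha1_cvg).
have transversal : \forall e \near 0^'+, alpha0 e != alpha1 e /\
    c * Normc.normc (alpha0 e - alpha1 e) <= complex.Im (alpha0 e - alpha1 e).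
  near=> e; have e_gt0 : 0 < e by near: e; exact: nbhs_right_gt.
  split; first exact: halne.
  have alpha1E : alpha1 e = - alpha0 e.
    by apply/eqP; rewrite -addr_eq0 addrC halsum ?ltW.
  have Im_gt0 : 0 < complex.Im (alpha0 e - alpha1 e).
    by rewrite alpha1E opprK raddfD addr_gt0 // himal.
  by rewrite -[X in _ <= X]gtr0_norm // hc.
split.
- exact: (mon_eig_cvgy c_gt0 D_cvg0 transversal hk01).
- exact: (mon_eig_swap_cvgy c_gt0 D_cvg0 transversal hk12).
- exact: (mon_eig_cvg0 c_gt0 D_cvg0 transversal hk02).
- exact: (mon_eig_swap_cvg0 c_gt0 D_cvg0 transversal hk11).
have N1_neq0 : (-1 : R[i]^o) != 0 by rewrite oppr_eq0 oner_eq0.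
exists (fun e => -1 * (k01 e / k02 e) - 1), (fun e => 1 * (k01 e / k11 e) - 1),
       (fun e => -1 * (k01 e / k12 e) - 1).
split.
- exact: (ratio_sub1_cvg0 N1_neq0 hk01 hk02).
- exact: (ratio_sub1_cvg0 (oner_neq0 _) hk01 hk11).
- exact: (ratio_sub1_cvg0 N1_neq0 hk01 hk12).
near=> e.
have [k02_neq0 k11_neq0 k12_neq0] : [/\ k02 e != 0, k11 e != 0 & k12 e != 0].
  split; near: e; [exact: (cvgr_neq0 _ hk02 N1_neq0)
    | exact: (cvgr_neq0 _ hk11 (oner_neq0 _)) | exact: (cvgr_neq0 _ hk12 N1_neq0)].
rewrite /L01 /L02 /L11 /L12 !(ln_lambda_swap _ (alpha1 e)); split.
- by rewrite (ln_lambda_ratio (k01 e) (k02 e)) //; ring.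
- by rewrite (ln_lambda_ratio (k01 e) (k11 e)) //; ring.
- by rewrite (ln_lambda_ratio (k01 e) (k12 e)) //; ring.
Unshelve. all: by end_near. Qed.
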